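(* Let $n\geq 2$ and let $M=(M_{ij})_{1\le i,j\le n}$ be an $n\times n$ matrix of integers with $M_{ij}>0$ for all $i,j$, $M_{11}=1$, and $M_{ii}>1$ for all $i\in\{2,\dots,n\}$. Then $\mathrm{Cat}(M)\neq\emptyset$ if and only if $M_{ii}>M_{1i}M_{i1}$ for all $i\in\{2,\dots,n\}$ and $M_{ij}\geq M_{i1}M_{1j}$ for all $i,j\in\{2,\dots,n\}$.
   Context: For an $n\times n$ matrix $M=(m_{ij})$ with entries in the natural numbers, $\mathrm{Cat}(M)$ denotes the collection of categories $A$ with exactly $n$ distinct objects $x_1,\dots,x_n$ such that $|A(x_i,x_j)|=m_{ij}$ for all $i,j$, where $A(x_i,x_j)$ is the set of morphisms from $x_i$ to $x_j$. *)

From mathcomp Require Import all_boot.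
Set Implicit Arguments. Unset Strict Implicit. Unset Printing Implicit Defensive.

(* A (small) category whose objects are exactly the n distinct objects
   x_0, ..., x_{n-1} (indexed by 'I_n), with finite hom-sets. *)
Record cat_on (n : nat) := CatOn {
  Hom : 'I_n -> 'I_n -> finType;
  idm : forall i : 'I_n, Hom i i;
  comp : forall i j k : 'I_n, Hom j k -> Hom i j -> Hom i k;
  comp_assoc : forall (i j k l : 'I_n) (f : Hom i j) (g : Hom j k) (h : Hom k l),
      comp h (comp g f) = comp (comp h g) f;
  comp_idl : forall (i j : 'I_n) (f : Hom i j), comp (idm j) f = f;
  comp_idr : forall (i j : 'I_n) (f : Hom i j), comp f (idm i) = f
}.

Definition in_Cat (n : nat) (M : 'I_n -> 'I_n -> nat) (A : cat_on n) : Prop :=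
  forall i j : 'I_n, #|Hom A i j| = M i j.

Definition Cat_nonempty (n : nat) (M : 'I_n -> 'I_n -> nat) : Prop :=
  exists A : cat_on n, in_Cat M A.

(** Necessity: if [End(x_1)] is trivial, composing through [x_1] embeds
    [A(x_i,x_1) × A(x_1,x_j)] into [A(x_i,x_j)], since a composite [g ∘ f]
    determines [f] and [g] once either is cancelled against a fixed map to or
    from [x_1]; for [i = j] the embedding misses [id], because [g ∘ f = id]
    would make [x_i] a retract of [x_1] and force [End(x_i)] to be trivial.

    Sufficiency: take [A(x_i,x_j) = {0, …, M_ij - 1}] and let the first
    [M_i1 M_1j] elements be the codes of the pairs [(f, g)], read as [g ∘ f];
    the last element of [A(x_i,x_i)] is the identity (for [i ≠ 1] it is not a
    code by the strict inequality), and every remaining element behaves like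
    the code of [(0, 0)].  Composition is then forced:
    [(f', g') ∘ (f, g) = (f, g')]. *)

From Pilot Require Import Defs.
From mathcomp Require Import all_boot.
From mathcomp Require Import zify.

Set Implicit Arguments. Unset Strict Implicit. Unset Printing Implicit Defensive.

Section ThroughTrivialObject.
Variables (n : nat) (A : cat_on n) (o : 'I_n).
Hypothesis endo_o_trivial : forall x : Hom A o o, x = idm A o.

Lemma comp_through_inj i j (h : Hom A o i) (k : Hom A j o) :
  injective (fun p : Hom A i o * Hom A o j => Defs.comp p.2 p.1).
Proof.
move=> [f g] [f' g'] /= e.
have eg : g = g'.
  by rewrite -(comp_idr g) -(comp_idr g') -{1}(endo_o_trivial (Defs.comp f h))
    -(endo_o_trivial (Defs.comp f' h)) !comp_assoc e.
subst g'.
have ef : f = f'.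
  by rewrite -(comp_idl f) -(comp_idl f') -(endo_o_trivial (Defs.comp k g))
    -!comp_assoc e.
by subst.
Qed.

Lemma card_comp_through_le i j : 0 < #|Hom A o i| -> 0 < #|Hom A j o| ->
  #|Hom A i o| * #|Hom A o j| <= #|Hom A i j|.
Proof.
move=> /card_gt0P[h _] /card_gt0P[k _].
by rewrite -card_prod -(card_image (comp_through_inj h k)) max_card.
Qed.

Lemma retract_endo_trivial i (f : Hom A i o) (g : Hom A o i) :
  Defs.comp g f = idm A i -> forall y : Hom A i i, y = idm A i.
Proof.
move=> gf y.
have -> : y = Defs.comp g (Defs.comp (Defs.comp f (Defs.comp y g)) f).
  by rewrite !comp_assoc gf comp_idl -comp_assoc gf comp_idr.
by rewrite (endo_o_trivial (Defs.comp f (Defs.comp y g))) comp_idl gf.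
Qed.

Lemma card_comp_through_lt i : 0 < #|Hom A o i| -> 0 < #|Hom A i o| ->
  1 < #|Hom A i i| -> #|Hom A o i| * #|Hom A i o| < #|Hom A i i|.
Proof.
move=> /card_gt0P[h _] /card_gt0P[k _] endo_i_big.
have misses_id : codom (fun p : Hom A i o * Hom A o i => Defs.comp p.2 p.1)
    \subset predC1 (idm A i).
  apply/subsetP => _ /codomP[[f g] ->]; rewrite !inE /=; apply/eqP => gf.
  move: endo_i_big; rewrite ltnNge => /negP; apply; apply/fintype_le1P => y z.
  by rewrite (retract_endo_trivial gf y) (retract_endo_trivial gf z).
have := subset_leq_card misses_id.
rewrite cardC1 (card_codom (comp_through_inj h k)) card_prod mulnC.
lia.
Qed.

End ThroughTrivialObject.

Section Construction.
Variables (n : nat) (M : 'I_n -> 'I_n -> nat) (o : 'I_n).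
Hypothesis M_gt0 : forall i j, 0 < M i j.
Hypothesis M_oo : M o o = 1.
Hypothesis M_diag_gt : forall i, i != o -> M o i * M i o < M i i.
Hypothesis M_through_le : forall i j, i != o -> j != o -> M i o * M o j <= M i j.

Local Notation to_o i := (M i o).
Local Notation from_o j := (M o j).

Definition code k f g := f * from_o k + g.

Definition is_id i j u := (i == j) && (u == (M i i).-1).

Definition fst_factor i j u := if u < to_o i * from_o j then u %/ from_o j else 0.
Definition snd_factor i j u := if u < to_o i * from_o j then u %% from_o j else 0.

(* [compose i j k w u] is [w ∘ u] for [u : x_i → x_j] and [w : x_j → x_k]. *)
Definition compose i j k w u :=
  if is_id i j u then w
  else if is_id j k w then u
  else code k (fst_factor i j u) (snd_factor j k w).

Lemma to_from_le i k : to_o i * from_o k <= M i k.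
Proof.
case: (eqVneq i o) => [->|io]; first by rewrite M_oo mul1n.
case: (eqVneq k o) => [->|ko]; first by rewrite M_oo muln1.
exact: M_through_le.
Qed.

Lemma fst_factor_lt i j u : fst_factor i j u < to_o i.
Proof.
rewrite /fst_factor; case: ifP => lt_u; last exact: M_gt0.
by rewrite ltn_divLR.
Qed.

Lemma snd_factor_lt i j u : snd_factor i j u < from_o j.
Proof. by rewrite /snd_factor; case: ifP; rewrite ?ltn_mod. Qed.

Lemma code_lt i k f g : f < to_o i -> g < from_o k -> code k f g < to_o i * from_o k.
Proof. rewrite /code; nia. Qed.

Lemma fst_factor_code i k f g : f < to_o i -> g < from_o k ->
  fst_factor i k (code k f g) = f.
Proof.
move=> lt_f lt_g; rewrite /fst_factor code_lt // /code divnMDl //.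
by rewrite divn_small // addn0.
Qed.

Lemma snd_factor_code i k f g : f < to_o i -> g < from_o k ->
  snd_factor i k (code k f g) = g.
Proof.
by move=> lt_f lt_g; rewrite /snd_factor code_lt // /code modnMDl modn_small.
Qed.

Lemma is_id_code i k f g : f < to_o i -> g < from_o k ->
  is_id i k (code k f g) = (i == o) && (k == o).
Proof.
move=> lt_f lt_g; have lt_code := code_lt lt_f lt_g.
rewrite /is_id; case: (eqVneq i k) => [ik|ik] /=; last first.
  by case: (eqVneq i o) ik => [->|] //; case: (eqVneq k o).
subst k; rewrite andbb; case: (eqVneq i o) => [io|io] /=.
  by subst i; apply/eqP; move: lt_code; rewrite /code M_oo; lia.
by apply/negbTE/eqP; move: (M_diag_gt io) lt_code; rewrite /code; lia.
Qed.

Lemma fst_factor_from_o j u : fst_factor o j u = 0.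
Proof. by have := fst_factor_lt o j u; rewrite M_oo; case: fst_factor. Qed.

Lemma snd_factor_to_o i u : snd_factor i o u = 0.
Proof. by have := snd_factor_lt i o u; rewrite M_oo; case: snd_factor. Qed.

Lemma fst_factor_to_o i u : u < M i o -> fst_factor i o u = u.
Proof. by rewrite /fst_factor M_oo muln1 divn1 => ->. Qed.

Lemma snd_factor_from_o j u : u < M o j -> snd_factor o j u = u.
Proof. by rewrite /snd_factor M_oo mul1n => lt_u; rewrite lt_u modn_small. Qed.

Lemma compose_lt i j k w u : u < M i j -> w < M j k -> compose i j k w u < M i k.
Proof.
move=> lt_u lt_w; rewrite /compose.
case: (is_id i j u) /andP => [[/eqP ij _]|_]; first by subst j.
case: (is_id j k w) /andP => [[/eqP jk _]|_]; first by subst k.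
by apply: leq_trans (to_from_le i k); rewrite code_lt ?fst_factor_lt ?snd_factor_lt.
Qed.

Lemma compose_assoc i j k l u w t : u < M i j -> w < M j k -> t < M k l ->
  compose i k l t (compose i j k w u) = compose i j l (compose j k l t w) u.
Proof.
move=> lt_u lt_w lt_t.
rewrite {2}/compose; case: (boolP (is_id i j u)) => id_u.
  by case/andP: (id_u) => /eqP ij _; subst j; rewrite /compose id_u.
rewrite {3}/compose; case: (boolP (is_id j k w)) => id_w.
  by case/andP: (id_w) => /eqP jk _; subst k.
case: (boolP (is_id k l t)) => id_t.
  case/andP: (id_t) => /eqP kl /eqP t_id; subst l t.
  rewrite /compose id_t ?(negbTE id_u) ?(negbTE id_w).
  by case: ifP => // /andP[/eqP -> /eqP ->].
rewrite /compose (negbTE id_u) ?(negbTE id_w) (negbTE id_t).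
rewrite !is_id_code ?fst_factor_lt ?snd_factor_lt //.
rewrite fst_factor_code ?snd_factor_code ?fst_factor_lt ?snd_factor_lt //.
(* Both sides are now the code of [(fst u, snd t)], unless [i = k = o] or
   [j = l = o] turns a composite into an identity; then the factors through
   [o] are trivial and [u] or [t] is its own code. *)
case: (eqVneq i o) => [io|io]; case: (eqVneq k o) => [ko|ko];
  case: (eqVneq j o) => [jo|jo]; case: (eqVneq l o) => [lo|lo] //=; subst.
all: rewrite /code ?fst_factor_from_o ?snd_factor_to_o ?snd_factor_from_o
  ?fst_factor_to_o ?M_oo ?muln1 ?addn0 //.
all: by move: lt_u lt_t; rewrite M_oo; lia.
Qed.

Definition coded_hom i j : finType := 'I_(M i j).

Definition coded_id i : coded_hom i i :=
  Ordinal (ltn_pmod (M i i).-1 (M_gt0 i i)).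

Definition coded_comp i j k (w : coded_hom j k) (u : coded_hom i j) : coded_hom i k :=
  Ordinal (ltn_pmod (compose i j k w u) (M_gt0 i k)).

Lemma val_coded_comp i j k (w : coded_hom j k) (u : coded_hom i j) :
  val (coded_comp w u) = compose i j k w u.
Proof. by rewrite /= modn_small // compose_lt. Qed.

Lemma val_coded_id i : val (coded_id i) = (M i i).-1.
Proof. by rewrite /= modn_small // prednK. Qed.

Lemma coded_comp_assoc i j k l
    (f : coded_hom i j) (g : coded_hom j k) (h : coded_hom k l) :
  coded_comp h (coded_comp g f) = coded_comp (coded_comp h g) f.
Proof. by apply: val_inj; rewrite !val_coded_comp compose_assoc. Qed.

Lemma coded_comp_idl i j (f : coded_hom i j) : coded_comp (coded_id j) f = f.
Proof.
apply: val_inj; rewrite val_coded_comp val_coded_id /compose.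
case: ifP => [/andP[/eqP ij /eqP f_id]|_]; first by subst j.
by rewrite /is_id !eqxx.
Qed.

Lemma coded_comp_idr i j (f : coded_hom i j) : coded_comp f (coded_id i) = f.
Proof.
by apply: val_inj; rewrite val_coded_comp val_coded_id /compose /is_id !eqxx.
Qed.

Definition coded_cat : cat_on n := CatOn coded_comp_assoc coded_comp_idl coded_comp_idr.

Lemma coded_cat_in_Cat : in_Cat M coded_cat.
Proof. by move=> i j; rewrite card_ord. Qed.

End Construction.

Theorem mainTheorem6 (n : nat) (Hn : 1 < n) (M : 'I_n -> 'I_n -> nat) :
  (forall i j : 'I_n, 0 < M i j) ->
  M (Ordinal (ltnW Hn)) (Ordinal (ltnW Hn)) = 1 ->
  (forall i : 'I_n, 0 < i -> 1 < M i i) ->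
  (Cat_nonempty M <->
   ((forall i : 'I_n, 0 < i ->
       M (Ordinal (ltnW Hn)) i * M i (Ordinal (ltnW Hn)) < M i i) /\
    (forall i j : 'I_n, 0 < i -> 0 < j ->
       M i (Ordinal (ltnW Hn)) * M (Ordinal (ltnW Hn)) j <= M i j))).
Proof.
set o := Ordinal (ltnW Hn) => M_gt0 M_oo M_diag_gt1.
have neq_o (i : 'I_n) : (i != o) = (0 < i).
  by rewrite lt0n -(inj_eq val_inj).
split=> [[A A_in]|[M_diag_gt M_through_le]].
  have endo_o_trivial (x : Hom A o o) : x = idm A o.
    by apply/fintype_le1P; rewrite A_in M_oo.
  split=> [i i_gt0|i j _ _]; rewrite -!A_in.
    by apply: card_comp_through_lt; rewrite ?A_in ?M_diag_gt1.
  by apply: card_comp_through_le; rewrite ?A_in.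
have diag_gt (i : 'I_n) : i != o -> M o i * M i o < M i i.
  by rewrite neq_o; apply: M_diag_gt.
have through_le (i j : 'I_n) : i != o -> j != o -> M i o * M o j <= M i j.
  by rewrite !neq_o; apply: M_through_le.
by exists (coded_cat M_gt0 M_oo diag_gt through_le); apply: coded_cat_in_Cat.
Qed.
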